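(* Let $\Phi:\{0,1\}^\omega\to\{0,1\}^\omega$ be a computable injection and let $b$ be a computable $\Phi$-martingale. Then for every $\sigma$ the limit $$b'(\sigma)=\lim_{n\to\infty}\sum_{\tau\in\{0,1\}^n} b(\tau)\,\frac{\mu([\sigma]\cap\Phi^{-1}([\tau]))}{\mu([\sigma])}$$ exists, and $b'$ is a total computable martingale (with respect to $\mu$).
   Context: $\mu$ is the uniform (fair-coin) measure on $\{0,1\}^\omega$ and $[\tau]$ the set of sequences extending $\tau$. For a computable $\Phi$, a $\Phi$-martingale is a function $b:\{0,1\}^{<\omega}\to\mathbb{R}_{\ge0}$ with $b(\tau)\mu(\Phi^{-1}[\tau])=b(\tau0)\mu(\Phi^{-1}[\tau0])+b(\tau1)\mu(\Phi^{-1}[\tau1])$ for all $\tau$; it is computable if $b(\tau)$ is a computable real uniformly in $\tau$. A (total) martingale is $m:\{0,1\}^{<\omega}\to\mathbb{R}_{\ge0}$ with $m(\sigma0)+m(\sigma1)=2m(\sigma)$. *)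

From Stdlib Require Import Reals Lra Lia Arith List ClassicalEpsilon.
Import ListNotations.
Open Scope R_scope.

Inductive code : Type :=
| CZero : code
| CSucc : code
| CProj : nat -> code
| CComp : code -> list code -> code
| CPrim : code -> code -> code
| CMu   : code -> code.

Inductive eval : code -> list nat -> nat -> Prop :=
| ev_zero : forall xs, eval CZero xs 0
| ev_succ : forall xs, eval CSucc xs (S (hd 0%nat xs))
| ev_proj : forall i xs, eval (CProj i) xs (nth i xs 0%nat)
| ev_comp : forall f gs xs ys y,
    evals gs xs ys -> eval f ys y -> eval (CComp f gs) xs y
| ev_prim0 : forall f g xs y,
    eval f xs y -> eval (CPrim f g) (0%nat :: xs) y
| ev_primS : forall f g n xs z y,
    eval (CPrim f g) (n :: xs) z -> eval g (n :: z :: xs) y ->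
    eval (CPrim f g) (S n :: xs) y
| ev_mu : forall f xs n,
    eval f (n :: xs) 0%nat ->
    (forall m, (m < n)%nat -> exists k, eval f (m :: xs) (S k)) ->
    eval (CMu f) xs n
with evals : list code -> list nat -> list nat -> Prop :=
| evs_nil : forall xs, evals [] xs []
| evs_cons : forall g gs xs y ys,
    eval g xs y -> evals gs xs ys -> evals (g :: gs) xs (y :: ys).

Definition computable_fun (f : nat -> nat) : Prop :=
  exists c : code, forall n : nat, eval c [n] (f n).

Definition npair (a b : nat) : nat := ((a + b) * (a + b + 1) / 2 + b)%nat.

Fixpoint enc_bits (s : list bool) : nat :=
  match s with
  | [] => 0%nat
  | b :: s' => (2 * enc_bits s' + (if b then 2 else 1))%nat
  end.

Definition cantor := nat -> bool.

Definition ext (X : cantor) (tau : list bool) : Prop :=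
  forall i : nat, (i < length tau)%nat -> X i = nth i tau false.

Definition restr (X : cantor) (n : nat) : list bool := map X (seq 0 n).

Fixpoint all_strings (n : nat) : list (list bool) :=
  match n with
  | O => [[]]
  | S n' => flat_map (fun s => [false :: s; true :: s]) (all_strings n')
  end.

Definition sumR {A : Type} (l : list A) (f : A -> R) : R :=
  fold_right (fun a acc => f a + acc) 0 l.

(** For clopen A (all sets to which mu is applied in
    the statement, since a computable Phi is continuous) this is the
    fair-coin measure of A. *)
Definition indic (P : Prop) : R :=
  if excluded_middle_informative P then 1 else 0.

Definition inner (n : nat) (A : cantor -> Prop) : R :=
  sumR (all_strings n)
    (fun rho => indic (forall X, ext X rho -> A X) * (/ 2) ^ n).

Definition mu (A : cantor -> Prop) : R :=
  epsilon (inhabits 0) (fun r => is_lub (fun x => exists n, x = inner n A) r).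

(** Phi : 2^omega -> 2^omega is computable (a total Turing functional):
    there is a computable h such that h(<sigma,m>) is either 2 ("not yet
    determined using oracle prefix sigma") or the m-th bit of Phi(X) for every
    X extending sigma, and for every X and m some prefix of X determines it. *)
Definition computable_functional (Phi : cantor -> cantor) : Prop :=
  exists h : nat -> nat,
    computable_fun h /\
    (forall (X : cantor) (m : nat),
        (exists n, h (npair (enc_bits (restr X n)) m) <> 2%nat) /\
        (forall n, h (npair (enc_bits (restr X n)) m) <> 2%nat ->
                   h (npair (enc_bits (restr X n)) m) = (if Phi X m then 1 else 0)%nat)).

Definition computable_real_fun (b : list bool -> R) : Prop :=
  exists g : nat -> nat,
    computable_fun g /\
    (forall (tau : list bool) (k : nat),
        exists a c : nat,
          g (npair (enc_bits tau) k) = npair a c /\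
          Rabs (b tau - (INR a - INR c) / 2 ^ k) <= (/ 2) ^ k).

Definition preim (Phi : cantor -> cantor) (tau : list bool) : cantor -> Prop :=
  fun X => ext (Phi X) tau.

Definition Phi_martingale (Phi : cantor -> cantor) (b : list bool -> R) : Prop :=
  (forall tau, 0 <= b tau) /\
  (forall tau,
      b tau * mu (preim Phi tau) =
      b (tau ++ [false]) * mu (preim Phi (tau ++ [false])) +
      b (tau ++ [true]) * mu (preim Phi (tau ++ [true])) ).

Definition martingale (m : list bool -> R) : Prop :=
  (forall sigma, 0 <= m sigma) /\
  (forall sigma, m (sigma ++ [false]) + m (sigma ++ [true]) = 2 * m sigma).

Definition injective_cantor (Phi : cantor -> cantor) : Prop :=
  forall X Y : cantor, (forall n, Phi X n = Phi Y n) -> forall n, X n = Y n.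

(* A total computable functional on Cantor space is uniformly continuous, so
   for every [N] some [L] is such that the first [L] bits of [X] determine the
   first [N] bits of [Phi X]; as [Phi] is moreover injective, the clopen set
   [sigma] and its complement have images separated by some finite number [N]
   of output bits (both by König's lemma).  Beyond that [N], every output
   cylinder [tau] either misses [Phi [sigma]] or has its preimage inside
   [sigma], so the [Phi]-martingale equation makes the sums defining
   [b'(sigma)] constant.  The limit is then the average of [b (Phi X |N)] over
   the length-[L] cylinders inside [sigma], from which the martingale equation
   for [b'] is read off.  Suitable [N] and [L] are found by a search that checks
   finitely many strings, and the average is then approximated to any
   precision from the approximations of [b]. *)

From Stdlib Require Import Reals Lra Lia Arith List ClassicalEpsilon Classical
  FunctionalExtensionality PropExtensionality.
Import ListNotations.
Local Open Scope nat_scope.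

(** * Partial recursive functions of an environment *)

Definition env := nat -> nat.

Definition econs (a : nat) (r : env) : env :=
  fun i => match i with 0 => a | S j => r j end.

Definition env_of_list (xs : list nat) : env := fun i => nth i xs 0.

(* For every arity [k], some program computes [f] from [k] arguments, the
   environment being padded with zeros. *)
Definition computable_env (f : env -> nat) : Prop :=
  forall k, exists c, forall xs, length xs = k -> eval c xs (f (env_of_list xs)).

Lemma computable_env_ext f g :
  computable_env f -> (forall r, f r = g r) -> computable_env g.
Proof.
  intros Hf E k. destruct (Hf k) as [c Hc]. exists c. intros xs L. rewrite <- E. auto.
Qed.

Lemma computable_var i : computable_env (fun r => r i).
Proof. intros k. exists (CProj i). intros xs _. constructor. Qed.

Lemma computable_succ : computable_env (fun r => S (r 0)).
Proof.
  intros k. exists (CComp CSucc [CProj 0]). intros xs _.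
  econstructor. repeat constructor. constructor.
Qed.

Lemma computable_const n : computable_env (fun _ => n).
Proof.
  induction n as [|n IH].
  - intros k. exists CZero. intros xs _. constructor.
  - intros k. destruct (IH k) as [c Hc]. exists (CComp CSucc [c]). intros xs L.
    econstructor. constructor. apply Hc, L. constructor. constructor.
Qed.

Lemma computable_env_of_fun u : computable_fun u -> computable_env (fun r => u (r 0)).
Proof.
  intros [c Hc] k. exists (CComp c [CProj 0]). intros xs _.
  econstructor. repeat constructor. apply Hc.
Qed.

Lemma computable_comp f gs :
  computable_env f -> Forall computable_env gs ->
  computable_env (fun r => f (env_of_list (map (fun g => g r) gs))).
Proof.
  intros Hf Hgs k.
  assert (Hcs : exists cs, forall xs, length xs = k ->
            evals cs xs (map (fun g => g (env_of_list xs)) gs)).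
  { induction Hgs as [|g gs Hg _ [cs Hcs]].
    - exists []. intros. constructor.
    - destruct (Hg k) as [c Hc]. exists (c :: cs). intros xs L. constructor; auto. }
  destruct Hcs as [cs Hcs]. destruct (Hf (length gs)) as [cf Hcf].
  exists (CComp cf cs). intros xs L. econstructor.
  - apply Hcs, L.
  - apply Hcf. apply length_map.
Qed.

Lemma computable_comp1 u f :
  computable_env (fun r => u (r 0)) -> computable_env f ->
  computable_env (fun r => u (f r)).
Proof. intros Hu Hf. exact (computable_comp _ [f] Hu ltac:(repeat constructor; auto)). Qed.

Lemma computable_comp2 u f g :
  computable_env (fun r => u (r 0) (r 1)) ->
  computable_env f -> computable_env g ->
  computable_env (fun r => u (f r) (g r)).
Proof. intros Hu **. exact (computable_comp _ [f; g] Hu ltac:(repeat constructor; auto)). Qed.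

Lemma computable_comp3 u f g h :
  computable_env (fun r => u (r 0) (r 1) (r 2)) ->
  computable_env f -> computable_env g -> computable_env h ->
  computable_env (fun r => u (f r) (g r) (h r)).
Proof. intros Hu **. exact (computable_comp _ [f; g; h] Hu ltac:(repeat constructor; auto)). Qed.

Lemma computable_comp4 u f g h j :
  computable_env (fun r => u (r 0) (r 1) (r 2) (r 3)) ->
  computable_env f -> computable_env g -> computable_env h -> computable_env j ->
  computable_env (fun r => u (f r) (g r) (h r) (j r)).
Proof. intros Hu **. exact (computable_comp _ [f; g; h; j] Hu ltac:(repeat constructor; auto)). Qed.

Lemma computable_comp5 u f g h j l :
  computable_env (fun r => u (r 0) (r 1) (r 2) (r 3) (r 4)) ->
  computable_env f -> computable_env g -> computable_env h -> computable_env j ->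
  computable_env l ->
  computable_env (fun r => u (f r) (g r) (h r) (j r) (l r)).
Proof.
  intros Hu **. exact (computable_comp _ [f; g; h; j; l] Hu ltac:(repeat constructor; auto)).
Qed.

Lemma evals_proj (l : list nat) xs :
  evals (map CProj l) xs (map (fun i => nth i xs 0) l).
Proof. induction l; simpl; constructor; auto. constructor. Qed.

Lemma map_nth_seq (xs : list nat) :
  map (fun i => nth i xs 0) (seq 0 (length xs)) = xs.
Proof.
  induction xs as [|a xs IH]; simpl; auto. f_equal.
  rewrite <- seq_shift, map_map. exact IH.
Qed.

Lemma computable_rename B (rho : nat -> nat) :
  (forall k, exists m, forall i, (m <= i) -> (k <= rho i)) ->
  computable_env B -> computable_env (fun r => B (fun i => r (rho i))).
Proof.
  intros Hr HB k. destruct (Hr k) as [m Hm]. destruct (HB m) as [c Hc].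
  exists (CComp c (map CProj (map rho (seq 0 m)))). intros xs L.
  econstructor. apply evals_proj.
  replace (fun i => env_of_list xs (rho i))
    with (env_of_list (map (fun i => nth i xs 0) (map rho (seq 0 m)))).
  { apply Hc. rewrite !length_map, length_seq; auto. }
  apply functional_extensionality. intros i. unfold env_of_list.
  destruct (Nat.lt_ge_cases i m).
  - rewrite map_map, nth_indep with (d' := nth (rho 0) xs 0)
      by (rewrite length_map, length_seq; auto).
    rewrite (map_nth (fun x => nth (rho x) xs 0)), seq_nth; auto.
  - rewrite nth_overflow by (rewrite !length_map, length_seq; lia).
    rewrite nth_overflow; auto. specialize (Hm i H). lia.
Qed.

Fixpoint prim_rec (fb fs : env -> nat) (n : nat) (r : env) : nat :=
  match n with
  | 0 => fb r
  | S n' => fs (econs n' (econs (prim_rec fb fs n' r) r))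
  end.

Lemma computable_prim_rec fb fs fn :
  computable_env fb -> computable_env fs -> computable_env fn ->
  computable_env (fun r => prim_rec fb fs (fn r) r).
Proof.
  intros Hb Hs Hn k.
  destruct (Hb k) as [cb Hcb], (Hs (S (S k))) as [cs Hcs], (Hn k) as [cn Hcn].
  exists (CComp (CPrim cb cs) (cn :: map CProj (seq 0 k))). intros xs L.
  econstructor. constructor. apply Hcn; auto. apply evals_proj.
  rewrite <- L, map_nth_seq.
  induction (fn (env_of_list xs)) as [|n IH]; simpl.
  - constructor. apply Hcb; auto.
  - econstructor. apply IH.
    replace (econs n (econs (prim_rec fb fs n (env_of_list xs)) (env_of_list xs)))
      with (env_of_list (n :: prim_rec fb fs n (env_of_list xs) :: xs)).
    + apply Hcs. simpl; lia.
    + apply functional_extensionality. intros [|[|i]]; reflexivity.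
Qed.

(* The least zero of [p]; an arbitrary value if [p] has none. *)
Definition minz (p : nat -> nat) : nat :=
  epsilon (inhabits 0)
    (fun n => p n = 0 /\ forall m, (m < n) -> p m <> 0).

Lemma minz_spec p : (exists n, p n = 0) ->
  p (minz p) = 0 /\ forall m, (m < minz p) -> p m <> 0.
Proof.
  intros [n Hn]. unfold minz. apply epsilon_spec.
  induction n as [n IH] using lt_wf_ind.
  destruct (classic (exists m, (m < n) /\ p m = 0)) as [[m [Hm1 Hm2]]|Hno].
  - eapply IH; eauto.
  - exists n. split; auto. intros m Hm E. apply Hno. eauto.
Qed.

Lemma minz_unique p n :
  p n = 0 -> (forall m, (m < n) -> p m <> 0) -> minz p = n.
Proof.
  intros H1 H2. destruct (minz_spec p) as [A B]; eauto.
  destruct (lt_eq_lt_dec (minz p) n) as [[Hl|He]|Hg]; auto.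
  - exfalso; eapply H2; eauto.
  - exfalso; eapply B; eauto.
Qed.

Lemma computable_minz (P : nat -> env -> nat) :
  computable_env (fun r => P (r 0) (fun j => r (S j))) ->
  (forall r, exists n, P n r = 0) ->
  computable_env (fun r => minz (fun n => P n r)).
Proof.
  intros HP Tot k. destruct (HP (S k)) as [c Hc]. exists (CMu c). intros xs L.
  assert (E : forall n, env_of_list (n :: xs) = econs n (env_of_list xs)).
  { intros n. apply functional_extensionality. intros [|i]; reflexivity. }
  destruct (minz_spec (fun n => P n (env_of_list xs))) as [A B]. apply Tot.
  constructor.
  - rewrite <- A. specialize (Hc (minz (fun n => P n (env_of_list xs)) :: xs)).
    rewrite E in Hc. apply Hc. simpl; lia.
  - intros m Hm. specialize (B m Hm).
    destruct (P m (env_of_list xs)) as [|v] eqn:Ev. congruence.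
    exists v. rewrite <- Ev. specialize (Hc (m :: xs)). rewrite E in Hc. apply Hc. simpl; lia.
Qed.

Lemma computable_add : computable_env (fun r => (r 0 + r 1)).
Proof.
  eapply computable_env_ext.
  - apply (computable_prim_rec (fun r => r 1) (fun r => S (r 1)) (fun r => r 0)).
    + apply computable_var.
    + apply (computable_comp1 S). apply computable_succ. apply computable_var.
    + apply computable_var.
  - intros r. simpl. induction (r 0); simpl; auto.
Qed.

Fixpoint nsum (n : nat) (f : nat -> nat) : nat :=
  match n with 0 => 0 | S n' => (nsum n' f + f n') end.

Lemma computable_nsum F (B : nat -> env -> nat) :
  computable_env F -> computable_env (fun r => B (r 0) (fun j => r (S j))) ->
  computable_env (fun r => nsum (F r) (fun i => B i r)).
Proof.
  intros HF HB. eapply computable_env_ext.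
  - apply (computable_prim_rec (fun _ => 0)
             (fun r => r 1 + B (r 0) (fun j => r (S (S j)))) F).
    + apply computable_const.
    + apply (computable_comp2 Nat.add).
      * exact computable_add.
      * apply computable_var.
      * apply (computable_rename (fun r => B (r 0) (fun j => r (S j)))
                 (fun i => match i with 0 => 0 | S j => S (S j) end)); auto.
        intros k. exists k. intros [|i] Hi; lia.
    + exact HF.
  - intros r. simpl. induction (F r); simpl; auto.
Qed.

Create HintDb computable.

Ltac computable := cbv beta; lazymatch goal with
 | |- computable_env (fun r => r ?i) => apply computable_var
 | |- computable_env (fun _ => ?n) => apply computable_const
 | |- computable_env (fun r => nsum (@?F r) (fun i => @?B i r)) =>
     apply (computable_nsum F B); computable
 | |- computable_env (fun r => ?u (@?X1 r) (@?X2 r) (@?X3 r) (@?X4 r) (@?X5 r)) =>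
     apply (computable_comp5 u X1 X2 X3 X4 X5); [solve [eauto with computable] | computable ..]
 | |- computable_env (fun r => ?u (@?X1 r) (@?X2 r) (@?X3 r) (@?X4 r)) =>
     apply (computable_comp4 u X1 X2 X3 X4); [solve [eauto with computable] | computable ..]
 | |- computable_env (fun r => ?u (@?X1 r) (@?X2 r) (@?X3 r)) =>
     apply (computable_comp3 u X1 X2 X3); [solve [eauto with computable] | computable ..]
 | |- computable_env (fun r => ?u (@?X1 r) (@?X2 r)) =>
     apply (computable_comp2 u X1 X2); [solve [eauto with computable] | computable ..]
 | |- computable_env (fun r => ?u (@?X1 r)) =>
     apply (computable_comp1 u X1); [solve [eauto with computable] | computable]
 end.

#[local] Hint Resolve computable_succ computable_env_of_fun computable_add : computable.


Lemma computable_mul : computable_env (fun r => r 0 * r 1).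
Proof.
  eapply computable_env_ext.
  - apply (computable_prim_rec (fun _ => 0) (fun r => r 1 + r 3) (fun r => r 0)); computable.
  - intros r. simpl. induction (r 0); simpl; lia.
Qed.
#[local] Hint Resolve computable_mul : computable.

Lemma computable_pred : computable_env (fun r => Nat.pred (r 0)).
Proof.
  eapply computable_env_ext.
  - apply (computable_prim_rec (fun _ => 0) (fun r => r 0) (fun r => r 0)); computable.
  - intros r. simpl. destruct (r 0); reflexivity.
Qed.
#[local] Hint Resolve computable_pred : computable.

Lemma computable_sub : computable_env (fun r => r 0 - r 1).
Proof.
  eapply computable_env_ext.
  - apply (computable_prim_rec (fun r => r 0) (fun r => Nat.pred (r 1)) (fun r => r 1));
      computable.
  - intros r. simpl. induction (r 1); simpl; lia.
Qed.
#[local] Hint Resolve computable_sub : computable.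

Lemma computable_pow : computable_env (fun r => r 0 ^ r 1).
Proof.
  eapply computable_env_ext.
  - apply (computable_prim_rec (fun _ => 1) (fun r => r 1 * r 2) (fun r => r 1)); computable.
  - intros r. simpl. induction (r 1); simpl; lia.
Qed.
#[local] Hint Resolve computable_pow : computable.

(* [r0 / r1] is the least [q] with [r0 < (q + 1) * r1], and [0] when [r1 = 0]. *)
Lemma computable_div : computable_env (fun r => r 0 / r 1).
Proof.
  eapply computable_env_ext.
  - apply (computable_minz (fun q r => r 1 * (S (r 0) - S q * r 1))); [computable |].
    intros r. exists (r 0). destruct (r 1); simpl; nia.
  - intros r. apply minz_unique.
    + destruct (r 1) as [|d]; [reflexivity |].
      pose proof (Nat.div_mod (r 0) (S d)). pose proof (Nat.mod_upper_bound (r 0) (S d)).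
      nia.
    + intros m Hm. destruct (r 1) as [|d]; [simpl in Hm; lia |].
      pose proof (Nat.div_mod (r 0) (S d)). nia.
Qed.
#[local] Hint Resolve computable_div : computable.

Lemma computable_mod : computable_env (fun r => r 0 mod r 1).
Proof.
  eapply computable_env_ext.
  - apply (computable_comp2 Nat.sub (fun r => r 0) (fun r => r 1 * (r 0 / r 1))); computable.
  - intros r. cbv beta. pose proof (Nat.div_mod_eq (r 0) (r 1)). lia.
Qed.
#[local] Hint Resolve computable_mod : computable.

Definition is_zero x := 1 - x.
Definition eq_test a b := is_zero ((a - b) + (b - a)).
Definition neq_test a b := 1 - eq_test a b.

Lemma is_zero_spec x : is_zero x = if x =? 0 then 1 else 0.
Proof. unfold is_zero. destruct x; simpl; lia. Qed.

Lemma eq_test_spec a b : eq_test a b = if a =? b then 1 else 0.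
Proof.
  unfold eq_test, is_zero. destruct (Nat.eqb_spec a b); [subst; rewrite Nat.sub_diag |]; lia.
Qed.

Lemma neq_test_spec a b : neq_test a b = if a =? b then 0 else 1.
Proof. unfold neq_test. rewrite eq_test_spec. destruct (a =? b); lia. Qed.

Lemma computable_is_zero : computable_env (fun r => is_zero (r 0)).
Proof. unfold is_zero. computable. Qed.

Lemma computable_eq_test : computable_env (fun r => eq_test (r 0) (r 1)).
Proof. unfold eq_test, is_zero. computable. Qed.

Lemma computable_neq_test : computable_env (fun r => neq_test (r 0) (r 1)).
Proof. unfold neq_test, eq_test, is_zero. computable. Qed.

Lemma computable_npair : computable_env (fun r => npair (r 0) (r 1)).
Proof. unfold npair. computable. Qed.

#[local] Hint Resolve computable_is_zero computable_eq_test computable_neq_test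
  computable_npair : computable.

Lemma nsum_zero n f : nsum n f = 0 <-> forall i, i < n -> f i = 0.
Proof.
  induction n as [|n IH]; simpl; [split; intros; auto; lia |].
  split.
  - intros H i Hi. destruct (Nat.eq_dec i n) as [->|E]; [lia |]. apply IH; lia.
  - intros H. rewrite (proj2 IH) by (intros; apply H; lia). rewrite H; lia.
Qed.

Lemma nsum_pos n f : nsum n f <> 0 <-> exists i, i < n /\ f i <> 0.
Proof.
  rewrite nsum_zero. split.
  - intros H. apply NNPP. intros H2. apply H. intros i Hi. apply NNPP. eauto.
  - intros [i [Hi Hf]] H. apply Hf, H, Hi.
Qed.

Lemma nsum_ext_lt n f g : (forall i, i < n -> f i = g i) -> nsum n f = nsum n g.
Proof. induction n; simpl; auto. intros H. rewrite IHn, H; auto. Qed.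

Lemma nsum_mul_l n c f : nsum n (fun i => c * f i) = c * nsum n f.
Proof. induction n; simpl; auto. rewrite IHn. ring. Qed.

Lemma nsum_succ_l n f : nsum (S n) f = f 0 + nsum n (fun i => f (S i)).
Proof. revert f; induction n; intros f; simpl in *; [lia |]. rewrite IHn. lia. Qed.

Definition triangle (s : nat) := s * S s / 2.

Lemma triangle_S s : triangle (S s) = triangle s + S s.
Proof.
  unfold triangle. replace (S s * S (S s)) with (s * S s + S s * 2) by lia.
  rewrite Nat.div_add; lia.
Qed.

Lemma triangle_mono a b : a <= b -> triangle a <= triangle b.
Proof. induction 1; auto. rewrite triangle_S. lia. Qed.

Lemma triangle_ge s : s <= triangle s.
Proof. induction s; [lia |]. rewrite triangle_S. lia. Qed.

Lemma npair_triangle a b : npair a b = triangle (a + b) + b.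
Proof. unfold npair, triangle. do 3 f_equal. lia. Qed.

Definition unpair_sum z := minz (fun s => S z - triangle (S s)).
Definition unpair_snd z := z - triangle (unpair_sum z).
Definition unpair_fst z := unpair_sum z - unpair_snd z.

Lemma unpair_sum_npair a b : unpair_sum (npair a b) = a + b.
Proof.
  unfold unpair_sum. apply minz_unique.
  - rewrite npair_triangle, triangle_S. lia.
  - intros m Hm. rewrite npair_triangle. pose proof (triangle_mono (S m) (a + b)). lia.
Qed.

Lemma unpair_snd_npair a b : unpair_snd (npair a b) = b.
Proof. unfold unpair_snd. rewrite unpair_sum_npair, npair_triangle. lia. Qed.

Lemma unpair_fst_npair a b : unpair_fst (npair a b) = a.
Proof. unfold unpair_fst. rewrite unpair_sum_npair, unpair_snd_npair. lia. Qed.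

Lemma computable_unpair_sum : computable_env (fun r => unpair_sum (r 0)).
Proof.
  unfold unpair_sum. apply (computable_minz (fun s r => S (r 0) - triangle (S s))).
  - unfold triangle. computable.
  - intros r. exists (r 0). rewrite triangle_S. pose proof (triangle_ge (r 0)). lia.
Qed.
#[local] Hint Resolve computable_unpair_sum : computable.

Lemma computable_unpair_snd : computable_env (fun r => unpair_snd (r 0)).
Proof. unfold unpair_snd, triangle. computable. Qed.
#[local] Hint Resolve computable_unpair_snd : computable.

Lemma computable_unpair_fst : computable_env (fun r => unpair_fst (r 0)).
Proof. unfold unpair_fst. computable. Qed.
#[local] Hint Resolve computable_unpair_fst : computable.

Lemma pow2_pos n : 0 < 2 ^ n.
Proof. apply Nat.neq_0_lt_0, Nat.pow_nonzero. lia. Qed.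

(* The length of the string coded by [e], and its index among the strings of
   that length: [enc_bits] enumerates the strings of length [s] as
   [2^s - 1, ..., 2^(s+1) - 2]. *)
Definition enc_length e := minz (fun s => (e + 2) - 2 ^ S s).
Definition enc_index e := e + 1 - 2 ^ enc_length e.

Lemma computable_enc_length : computable_env (fun r => enc_length (r 0)).
Proof.
  unfold enc_length. apply (computable_minz (fun s r => (r 0 + 2) - 2 ^ S s)).
  - computable.
  - intros r. exists (r 0). enough (S (r 0) + 1 <= 2 ^ S (r 0)) by lia.
    induction (S (r 0)); simpl; lia.
Qed.
#[local] Hint Resolve computable_enc_length : computable.

Lemma computable_enc_index : computable_env (fun r => enc_index (r 0)).
Proof. unfold enc_index. computable. Qed.
#[local] Hint Resolve computable_enc_index : computable.

Fixpoint bits (L r : nat) : list bool :=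
  match L with 0 => [] | S L' => Nat.odd r :: bits L' (Nat.div2 r) end.

Lemma bits_length L r : length (bits L r) = L.
Proof. revert r; induction L; simpl; auto. Qed.

Lemma odd_b2n_double x c : Nat.odd (Nat.b2n c + 2 * x) = c.
Proof. rewrite Nat.odd_add_mul_2. destruct c; reflexivity. Qed.

Lemma div2_b2n_double x c : Nat.div2 (Nat.b2n c + 2 * x) = x.
Proof.
  destruct c; simpl Nat.b2n.
  - replace (1 + 2 * x) with (S (2 * x)) by lia. apply Nat.div2_succ_double.
  - apply Nat.div2_double.
Qed.

Lemma bits_b2n_double n c x : bits (S n) (Nat.b2n c + 2 * x) = c :: bits n x.
Proof. cbn [bits]. rewrite odd_b2n_double, div2_b2n_double. reflexivity. Qed.

Lemma enc_bits_bits L r : enc_bits (bits L r) = r mod 2 ^ L + 2 ^ L - 1.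
Proof.
  revert r; induction L as [|L IH]; intros r.
  - cbn [bits enc_bits]. rewrite Nat.pow_0_r, Nat.mod_1_r. lia.
  - pose proof (Nat.div2_odd r) as E.
    remember (Nat.div2 r) as q. remember (Nat.odd r) as c.
    replace r with (Nat.b2n c + 2 * q) by lia.
    rewrite bits_b2n_double. cbn [enc_bits]. rewrite IH, Nat.pow_succ_r'.
    pose proof (pow2_pos L). pose proof (Nat.mod_upper_bound q (2 ^ L)).
    assert (M : (Nat.b2n c + 2 * q) mod (2 * 2 ^ L) = Nat.b2n c + 2 * (q mod 2 ^ L)).
    { symmetry. apply Nat.mod_unique with (q := q / 2 ^ L).
      - destruct c; simpl; lia.
      - pose proof (Nat.div_mod q (2 ^ L)). lia. }
    rewrite M. destruct c; simpl Nat.b2n; lia.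
Qed.

Lemma firstn_bits n L r : n <= L -> firstn n (bits L r) = bits n r.
Proof.
  revert L r; induction n; intros L r H; [reflexivity |].
  destruct L; [lia |]. simpl. f_equal. apply IHn. lia.
Qed.

Lemma enc_bits_bounds s : 2 ^ length s <= enc_bits s + 1 /\ enc_bits s + 2 <= 2 ^ S (length s).
Proof. induction s as [|[] s IH]; simpl in *; lia. Qed.

Lemma bits_enc_bits s : bits (length s) (enc_bits s + 1 - 2 ^ length s) = s.
Proof.
  induction s as [|c s IH]; [reflexivity |].
  pose proof (enc_bits_bounds s).
  replace (enc_bits (c :: s) + 1 - 2 ^ length (c :: s))
    with (Nat.b2n c + 2 * (enc_bits s + 1 - 2 ^ length s))
    by (cbn [enc_bits length]; rewrite Nat.pow_succ_r'; destruct c; simpl Nat.b2n; lia).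
  cbn [length]. rewrite bits_b2n_double, IH. reflexivity.
Qed.

Lemma enc_bits_inj s t : enc_bits s = enc_bits t -> s = t.
Proof.
  revert t; induction s as [|c s IH]; intros [|d t] H; simpl in H; auto.
  - destruct d; lia.
  - destruct c; lia.
  - destruct c, d; try lia; f_equal; apply IH; lia.
Qed.

Lemma enc_length_enc_bits s : enc_length (enc_bits s) = length s.
Proof.
  unfold enc_length. pose proof (enc_bits_bounds s). apply minz_unique; [lia |].
  intros m Hm. pose proof (Nat.pow_le_mono_r 2 (S m) (length s) ltac:(lia) ltac:(lia)). lia.
Qed.

Lemma all_strings_bits L : all_strings L = map (bits L) (seq 0 (2 ^ L)).
Proof.
  assert (D : forall n a m, flat_map (fun s => [false :: s; true :: s]) (map (bits n) (seq a m))
                           = map (bits (S n)) (seq (2 * a) (2 * m))).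
  { intros n a m. revert a. induction m as [|m IH]; intros a; [reflexivity |].
    replace (2 * S m) with (S (S (2 * m))) by lia.
    cbn [seq map flat_map app]. rewrite IH. replace (2 * S a) with (S (S (2 * a))) by lia.
    rewrite <- (bits_b2n_double n false a), <- (bits_b2n_double n true a). reflexivity. }
  induction L as [|L IH]; [reflexivity |].
  cbn [all_strings]. rewrite IH, D, Nat.pow_succ_r'. reflexivity.
Qed.

Lemma in_all_strings_length L s : In s (all_strings L) -> length s = L.
Proof.
  rewrite all_strings_bits. intros H. apply in_map_iff in H.
  destruct H as [r [<- _]]. apply bits_length.
Qed.

Definition pad (rho : list bool) : cantor := fun i => nth i rho false.

Lemma restr_length X n : length (restr X n) = n.
Proof. unfold restr. rewrite length_map, length_seq. auto. Qed.

Lemma nth_restr X n i : i < n -> nth i (restr X n) false = X i.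
Proof.
  intros H. unfold restr.
  rewrite nth_indep with (d' := X 0) by (rewrite length_map, length_seq; auto).
  rewrite map_nth, seq_nth; auto.
Qed.

Lemma restr_eq_iff X Y n : restr X n = restr Y n <-> forall i, i < n -> X i = Y i.
Proof.
  split.
  - intros H i Hi. rewrite <- (nth_restr X n i Hi), <- (nth_restr Y n i Hi), H. auto.
  - intros H. unfold restr. apply map_ext_in. intros a Ha. apply in_seq in Ha. apply H. lia.
Qed.

Lemma restr_S Y N : restr Y (S N) = Y 0 :: restr (fun i => Y (S i)) N.
Proof. unfold restr. simpl. f_equal. rewrite <- seq_shift, map_map. auto. Qed.

Lemma enc_bits_restr Y N :
  enc_bits (restr Y N) = nsum N (fun m => Nat.b2n (Y m) * 2 ^ m) + 2 ^ N - 1.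
Proof.
  revert Y; induction N as [|N IH]; intros Y; [reflexivity |].
  rewrite restr_S. cbn [enc_bits]. rewrite IH, nsum_succ_l.
  replace (nsum N (fun i => Nat.b2n (Y (S i)) * 2 ^ S i))
    with (2 * nsum N (fun i => Nat.b2n (Y (S i)) * 2 ^ i)).
  - pose proof (pow2_pos N). rewrite Nat.pow_0_r, Nat.pow_succ_r'.
    destruct (Y 0); simpl Nat.b2n; lia.
  - rewrite <- nsum_mul_l. apply nsum_ext_lt. intros i _. rewrite Nat.pow_succ_r'. ring.
Qed.


Lemma ext_restr_iff X rho : ext X rho <-> restr X (length rho) = rho.
Proof.
  split.
  - intros H. apply nth_ext with (d := false) (d' := false); rewrite restr_length; auto.
    intros i Hi. rewrite nth_restr by auto. apply H; auto.
  - intros H i Hi. rewrite <- H, nth_restr; auto.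
Qed.

Lemma ext_restr X n : ext X (restr X n).
Proof. apply ext_restr_iff. rewrite restr_length. reflexivity. Qed.

Lemma ext_pad rho : ext (pad rho) rho.
Proof. intros i Hi. reflexivity. Qed.

Lemma firstn_restr X n L : n <= L -> firstn n (restr X L) = restr X n.
Proof.
  intros H. unfold restr. rewrite firstn_map. f_equal.
  replace L with (n + (L - n)) by lia.
  rewrite seq_app, firstn_app, length_seq, Nat.sub_diag. simpl.
  rewrite app_nil_r. apply firstn_all2. rewrite length_seq. lia.
Qed.

Lemma ext_firstn X rho n : ext X rho -> n <= length rho -> restr X n = firstn n rho.
Proof. intros H Hn. apply ext_restr_iff in H. rewrite <- H, firstn_restr; auto. Qed.

Lemma restr_mono X Y n m : m <= n -> restr X n = restr Y n -> restr X m = restr Y m.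
Proof. rewrite !restr_eq_iff. intros Hm H i Hi. apply H. lia. Qed.

Lemma ext_of_restr_eq X Y sigma n :
  length sigma <= n -> restr X n = restr Y n -> ext X sigma -> ext Y sigma.
Proof.
  intros Hn E HX i Hi. rewrite <- HX by auto. rewrite restr_eq_iff in E.
  symmetry. apply E. lia.
Qed.

Lemma ext_app_iff X rho c : ext X (rho ++ [c]) <-> ext X rho /\ X (length rho) = c.
Proof.
  split.
  - intros H. split.
    + intros i Hi. rewrite H by (rewrite length_app; simpl; lia). rewrite app_nth1; auto.
    + rewrite H by (rewrite length_app; simpl; lia). rewrite app_nth2, Nat.sub_diag; auto.
  - intros [H1 H2] i Hi. rewrite length_app in Hi. simpl in Hi.
    destruct (Nat.lt_ge_cases i (length rho)).
    + rewrite app_nth1; auto.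
    + replace i with (length rho) by lia. rewrite app_nth2, Nat.sub_diag; auto.
Qed.

Lemma ext_cons Y c t : ext Y (c :: t) <-> Y 0 = c /\ ext (fun i => Y (S i)) t.
Proof.
  split.
  - intros H. split; [apply (H 0) | intros i Hi; apply (H (S i))]; simpl; lia.
  - intros [H1 H2] [|i] Hi; simpl; auto. apply H2. simpl in Hi; lia.
Qed.

Lemma ext_bits_iff X L r sigma : length sigma <= L -> ext X (bits L r) ->
  (ext X sigma <-> r mod 2 ^ length sigma = enc_bits sigma + 1 - 2 ^ length sigma).
Proof.
  intros HL HX. rewrite ext_restr_iff, (ext_firstn X (bits L r)), firstn_bits
    by (rewrite ?bits_length; auto).
  pose proof (enc_bits_bounds sigma). pose proof (pow2_pos (length sigma)).
  split.
  - intros E. apply (f_equal enc_bits) in E. rewrite enc_bits_bits in E. lia.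
  - intros E. apply enc_bits_inj. rewrite enc_bits_bits. lia.
Qed.

Definition restr_index X L := enc_bits (restr X L) + 1 - 2 ^ L.

Lemma restr_index_spec X L : restr_index X L < 2 ^ L /\ ext X (bits L (restr_index X L)).
Proof.
  unfold restr_index. pose proof (enc_bits_bounds (restr X L)) as B.
  pose proof (bits_enc_bits (restr X L)) as E. rewrite restr_length in B, E.
  split; [simpl in B; lia |]. rewrite E. apply ext_restr.
Qed.

(** * König's lemma for finitely branching trees *)

Section Koenig.
Variable A : Type.
Variable a0 : A.
Variable alphabet : list A.
Hypothesis alphabet_full : forall a, In a alphabet.
Variable T : list A -> Prop.
Hypothesis T_prefix_closed : forall u v, T (u ++ v) -> T u.
Hypothesis T_unbounded : forall n, exists u, length u = n /\ T u.

Definition extendable u := forall n, exists v, length v = n /\ T (u ++ v).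

Lemma extendable_step u : extendable u -> exists a, extendable (u ++ [a]).
Proof.
  intros Hu. apply NNPP. intros Hno.
  assert (Hdead : forall a, exists n, forall v, length v = n -> ~ T ((u ++ [a]) ++ v)).
  { intros a. apply NNPP. intros Hn. apply Hno. exists a. intros n. apply NNPP. intros Hn2.
    apply Hn. exists n. intros v Hv HT. apply Hn2. eauto. }
  assert (Hdead_mono : forall a n n', n <= n' ->
            (forall v, length v = n -> ~ T ((u ++ [a]) ++ v)) ->
            forall v, length v = n' -> ~ T ((u ++ [a]) ++ v)).
  { intros a n n' Hn H v Hv HT. apply (H (firstn n v)).
    - rewrite length_firstn. lia.
    - apply (T_prefix_closed _ (skipn n v)). rewrite <- app_assoc, firstn_skipn. auto. }
  assert (Hbound : forall l, exists M, forall a, In a l ->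
                     forall v, length v = M -> ~ T ((u ++ [a]) ++ v)).
  { induction l as [|x l [M HM]]; [exists 0; intros a [] |].
    destruct (Hdead x) as [n Hn]. exists (Nat.max M n).
    intros a [<-|Ha]; [apply (Hdead_mono x n) | apply (Hdead_mono a M)]; auto; lia. }
  destruct (Hbound alphabet) as [M HM]. destruct (Hu (S M)) as [[|a v] [Hv HT]]; [simpl in Hv; lia |].
  apply (HM a (alphabet_full a) v); [simpl in Hv; lia |]. rewrite <- app_assoc. auto.
Qed.

Fixpoint koenig_path (n : nat) : list A :=
  match n with
  | 0 => []
  | S n => koenig_path n ++
             [epsilon (inhabits a0) (fun a => extendable (koenig_path n ++ [a]))]
  end.

Lemma koenig_path_extendable n : extendable (koenig_path n).
Proof.
  induction n as [|n IH].
  - intros n. destruct (T_unbounded n) as [u Hu]. exists u. auto.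
  - apply (epsilon_spec (inhabits a0) (fun a => extendable (koenig_path n ++ [a]))).
    apply extendable_step, IH.
Qed.

Lemma koenig_path_length n : length (koenig_path n) = n.
Proof. induction n; simpl; auto. rewrite length_app; simpl; lia. Qed.

Lemma koenig : exists f : nat -> A, forall n, T (map f (seq 0 n)).
Proof.
  exists (fun i => nth i (koenig_path (S i)) a0). intros n.
  assert (E : koenig_path n = map (fun i => nth i (koenig_path (S i)) a0) (seq 0 n)).
  { induction n as [|n IH]; auto. rewrite seq_S, map_app, <- IH. simpl. f_equal. f_equal.
    rewrite app_nth2, koenig_path_length, Nat.sub_diag; rewrite ?koenig_path_length; auto. }
  rewrite <- E. destruct (koenig_path_extendable n 0) as [[|] [Hv HT]]; [|simpl in Hv; lia].
  rewrite app_nil_r in HT. auto.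
Qed.
End Koenig.

Local Open Scope R_scope.

Lemma sumR_ext_in {A} (l : list A) f g :
  (forall x, In x l -> f x = g x) -> sumR l f = sumR l g.
Proof. induction l; simpl; intros H; auto. rewrite H, IHl; auto. Qed.

Lemma sumR_plus {A} (l : list A) f g : sumR l (fun x => f x + g x) = sumR l f + sumR l g.
Proof. induction l; simpl; [lra |]. rewrite IHl. lra. Qed.

Lemma sumR_scal {A} (l : list A) c f : sumR l (fun x => c * f x) = c * sumR l f.
Proof. induction l; simpl; [lra |]. rewrite IHl. lra. Qed.

Lemma sumR_minus {A} (l : list A) f g : sumR l (fun x => f x - g x) = sumR l f - sumR l g.
Proof. induction l; simpl; [lra |]. rewrite IHl. lra. Qed.

Lemma sumR_le {A} (l : list A) f g :
  (forall x, In x l -> f x <= g x) -> sumR l f <= sumR l g.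
Proof. induction l; simpl; intros H; [lra |]. apply Rplus_le_compat; auto. Qed.

Lemma sumR_nonneg {A} (l : list A) f : (forall x, 0 <= f x) -> 0 <= sumR l f.
Proof. induction l; simpl; intros H; [lra |]. pose proof (H a). specialize (IHl H). lra. Qed.

Lemma sumR_app {A} (l1 l2 : list A) f : sumR (l1 ++ l2) f = sumR l1 f + sumR l2 f.
Proof. induction l1; simpl; [lra |]. rewrite IHl1. lra. Qed.

Lemma sumR_map {A B} (h : A -> B) (l : list A) f :
  sumR (map h l) f = sumR l (fun x => f (h x)).
Proof. induction l; simpl; auto. rewrite IHl; auto. Qed.

Lemma sumR_flat_map {A B} (h : A -> list B) (l : list A) f :
  sumR (flat_map h l) f = sumR l (fun x => sumR (h x) f).
Proof. induction l; simpl; auto. rewrite sumR_app, IHl; auto. Qed.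

Lemma sumR_swap {A B} (l1 : list A) (l2 : list B) F :
  sumR l1 (fun x => sumR l2 (fun y => F x y)) = sumR l2 (fun y => sumR l1 (fun x => F x y)).
Proof.
  induction l1; simpl.
  - induction l2; simpl; auto. lra.
  - rewrite IHl1, <- sumR_plus. auto.
Qed.

Lemma Rabs_sumR {A} (l : list A) f : Rabs (sumR l f) <= sumR l (fun x => Rabs (f x)).
Proof.
  induction l; simpl; [rewrite Rabs_R0; lra |].
  eapply Rle_trans; [apply Rabs_triang | lra].
Qed.

Lemma sumR_all_strings_S n (f : list bool -> R) :
  sumR (all_strings (S n)) f
  = sumR (all_strings n) (fun s => f (s ++ [false]) + f (s ++ [true])).
Proof.
  revert f; induction n as [|n IH]; intros f; [simpl; lra |].
  change (all_strings (S (S n)))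
    with (flat_map (fun s => [false :: s; true :: s]) (all_strings (S n))).
  rewrite sumR_flat_map.
  rewrite (sumR_ext_in _ _ (fun x => f (false :: x) + f (true :: x))) by (intros; simpl; lra).
  rewrite (IH (fun x => f (false :: x) + f (true :: x))).
  change (all_strings (S n)) with (flat_map (fun s => [false :: s; true :: s]) (all_strings n)).
  rewrite sumR_flat_map. apply sumR_ext_in. intros x _. simpl. lra.
Qed.

Lemma indic_iff P Q : (P <-> Q) -> indic P = indic Q.
Proof.
  intros H. unfold indic.
  destruct (excluded_middle_informative P), (excluded_middle_informative Q); tauto.
Qed.

Lemma indic_true (P : Prop) : P -> indic P = 1.
Proof. intros H. unfold indic. destruct (excluded_middle_informative P); tauto. Qed.

Lemma indic_false (P : Prop) : ~ P -> indic P = 0.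
Proof. intros H. unfold indic. destruct (excluded_middle_informative P); tauto. Qed.

Lemma indic_and P Q : indic (P /\ Q) = indic P * indic Q.
Proof.
  unfold indic. destruct (excluded_middle_informative P), (excluded_middle_informative Q),
    (excluded_middle_informative (P /\ Q)); try tauto; lra.
Qed.

Lemma indic_nonneg P : 0 <= indic P.
Proof. unfold indic. destruct (excluded_middle_informative P); lra. Qed.

Lemma indic_bool_eq (c d : bool) : indic (c = d) = if Bool.eqb c d then 1 else 0.
Proof. destruct c, d; simpl; (apply indic_true; reflexivity) || (apply indic_false; discriminate). Qed.

(* Exactly one string of length [N] is a prefix of [Y]. *)
Lemma sumR_all_strings_ext N (F : list bool -> R) (Y : cantor) :
  sumR (all_strings N) (fun t => F t * indic (ext Y t)) = F (restr Y N).
Proof.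
  revert F Y; induction N as [|N IH]; intros F Y.
  - simpl. rewrite indic_true; [unfold restr; simpl; lra |]. intros i Hi; simpl in Hi; lia.
  - change (all_strings (S N)) with (flat_map (fun s => [false :: s; true :: s]) (all_strings N)).
    rewrite sumR_flat_map, restr_S, <- (IH (fun t => F (Y 0%nat :: t)) (fun i => Y (S i))).
    apply sumR_ext_in. intros t _. simpl sumR.
    rewrite (indic_iff _ _ (ext_cons Y false t)), (indic_iff _ _ (ext_cons Y true t)).
    rewrite !indic_and, !indic_bool_eq. destruct (Y 0%nat); simpl; lra.
Qed.

Lemma ext_pad_app rho sigma c : (length sigma <= length rho)%nat ->
  (ext (pad (rho ++ [c])) sigma <-> ext (pad rho) sigma).
Proof.
  intros H. unfold pad.
  split; intros E i Hi; rewrite <- E by auto; rewrite app_nth1; auto; lia.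
Qed.

Lemma count_ext sigma L : (length sigma <= L)%nat ->
  sumR (all_strings L) (fun rho => indic (ext (pad rho) sigma)) = 2 ^ (L - length sigma).
Proof.
  induction 1 as [|L HL IH].
  - rewrite Nat.sub_diag, pow_O.
    transitivity (sumR (all_strings (length sigma)) (fun t => 1 * indic (ext (pad sigma) t))).
    2: apply sumR_all_strings_ext.
    apply sumR_ext_in. intros x Hx. apply in_all_strings_length in Hx.
    rewrite Rmult_1_l. apply indic_iff. unfold pad.
    split; intros E i Hi; symmetry; apply E; lia.
  - rewrite sumR_all_strings_S, Nat.sub_succ_l by auto. simpl pow.
    rewrite <- IH, <- sumR_scal. apply sumR_ext_in. intros x Hx. apply in_all_strings_length in Hx.
    rewrite !(indic_iff _ _ (ext_pad_app x sigma _ ltac:(lia))). lra.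
Qed.

(** * The uniform measure of sets determined by a finite prefix *)

Definition depends_on_prefix (L : nat) (A : cantor -> Prop) :=
  forall X Y, restr X L = restr Y L -> A X -> A Y.

Lemma inner_le_S n A : inner n A <= inner (S n) A.
Proof.
  unfold inner. rewrite sumR_all_strings_S. apply sumR_le. intros x _.
  assert (Hc : forall c, indic (forall X, ext X x -> A X)
                         <= indic (forall X, ext X (x ++ [c]) -> A X)).
  { intros c. unfold indic.
    destruct (excluded_middle_informative (forall X, ext X x -> A X)) as [P|P],
      (excluded_middle_informative (forall X, ext X (x ++ [c]) -> A X)) as [Q|Q]; try lra.
    exfalso. apply Q. intros X HX. apply P. apply ext_app_iff in HX. tauto. }
  pose proof (Hc false). pose proof (Hc true). simpl pow.
  assert (0 <= (/2)^n) by (apply pow_le; lra). nra.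
Qed.

Lemma inner_mono n m A : (n <= m)%nat -> inner n A <= inner m A.
Proof. induction 1; [lra | eapply Rle_trans; [eassumption | apply inner_le_S]]. Qed.

Lemma inner_stable n L A : depends_on_prefix L A -> (L <= n)%nat -> inner (S n) A = inner n A.
Proof.
  intros HA Hn. unfold inner. rewrite sumR_all_strings_S. apply sumR_ext_in. intros x Hx.
  apply in_all_strings_length in Hx.
  assert (Hc : forall c, indic (forall X, ext X (x ++ [c]) -> A X)
                         = indic (forall X, ext X x -> A X)).
  { intros c. apply indic_iff. split.
    - intros H X HX. set (X' := fun i => if Nat.eqb i (length x) then c else X i).
      apply (HA X').
      + apply restr_eq_iff. intros i Hi. unfold X'.
        destruct (Nat.eqb_spec i (length x)); auto. lia.
      + apply H, ext_app_iff. unfold X'. rewrite Nat.eqb_refl. split; auto.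
        intros i Hi. destruct (Nat.eqb_spec i (length x)); [lia | apply HX; auto].
    - intros H X HX. apply H. apply ext_app_iff in HX. tauto. }
  rewrite !Hc. simpl pow. field.
Qed.

Lemma mu_depends_on_prefix L A : depends_on_prefix L A -> mu A = inner L A.
Proof.
  intros HA.
  assert (Hle : forall n, inner n A <= inner L A).
  { intros n. destruct (Nat.le_gt_cases n L) as [H|H].
    - apply inner_mono, H.
    - replace n with (L + (n - L))%nat by lia. induction (n - L)%nat as [|d IH].
      + rewrite Nat.add_0_r; lra.
      + rewrite Nat.add_succ_r, (inner_stable _ L A HA) by lia. auto. }
  assert (Hlub : is_lub (fun x => exists n, x = inner n A) (inner L A)).
  { split; [intros x [n ->]; auto | intros b Hb; apply Hb; eauto]. }
  unfold mu.
  destruct (epsilon_spec (inhabits 0) (fun r => is_lub (fun x => exists n, x = inner n A) r))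
    as [B1 B2]; eauto.
  apply Rle_antisym; [apply B2, Hlub | apply Hlub, B1].
Qed.

Lemma mu_count L A : depends_on_prefix L A ->
  mu A = (/2)^L * sumR (all_strings L) (fun rho => indic (A (pad rho))).
Proof.
  intros HA. rewrite (mu_depends_on_prefix L A HA). unfold inner. rewrite <- sumR_scal.
  apply sumR_ext_in. intros x Hx. apply in_all_strings_length in Hx.
  rewrite Rmult_comm. f_equal. apply indic_iff. split.
  - intros H. apply H, ext_pad.
  - intros H X HX. apply (HA (pad x)); auto. subst L.
    rewrite (proj1 (ext_restr_iff _ _) HX). apply ext_restr_iff, ext_pad.
Qed.

Lemma mu_ext A B : (forall X, A X <-> B X) -> mu A = mu B.
Proof.
  intros H. replace B with A; auto. apply functional_extensionality. intros X.
  apply propositional_extensionality. auto.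
Qed.

Lemma mu_empty : mu (fun _ => False) = 0.
Proof.
  rewrite (mu_count 0 (fun _ => False)) by (intros X Y _ []).
  simpl. rewrite indic_false by tauto. lra.
Qed.

Lemma mu_cylinder sigma : mu (fun X => ext X sigma) = (/2)^(length sigma).
Proof.
  rewrite (mu_count (length sigma)), count_ext, Nat.sub_diag by
    (auto || (intros X Y E HX; apply (ext_of_restr_eq X Y sigma (length sigma)); auto)).
  simpl. lra.
Qed.

Local Open Scope nat_scope.

Lemma koenig_cantor_pairs (Q : nat -> cantor -> cantor -> Prop) :
  (forall n n' X Y, n <= n' -> Q n' X Y -> Q n X Y) ->
  (forall n, exists X Y, Q n X Y) ->
  exists X0 Y0, forall n, exists X Y,
    Q n X Y /\ restr X n = restr X0 n /\ restr Y n = restr Y0 n.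
Proof.
  intros Qanti Qne.
  set (T := fun w : list (bool * bool) => exists X Y, Q (length w) X Y /\
              restr X (length w) = map fst w /\ restr Y (length w) = map snd w).
  assert (Tpre : forall u v, T (u ++ v) -> T u).
  { intros u v [X [Y [HQ [HX HY]]]]. rewrite length_app in *. exists X, Y.
    split; [apply (Qanti _ _ _ _ (Nat.le_add_r _ _) HQ) |].
    rewrite <- !(firstn_restr _ (length u) (length u + length v)), HX, HY by lia.
    rewrite !firstn_map, firstn_app, Nat.sub_diag, firstn_all. simpl. rewrite app_nil_r. auto. }
  assert (Tne : forall n, exists w, length w = n /\ T w).
  { intros n. destruct (Qne n) as [X [Y HQ]].
    exists (map (fun i => (X i, Y i)) (seq 0 n)). rewrite length_map, length_seq.
    split; auto. exists X, Y. rewrite length_map, length_seq, !map_map. auto. }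
  destruct (koenig (bool * bool) (false, false) [(false,false); (false,true); (true,false); (true,true)]
              ltac:(intros [[] []]; simpl; tauto) T Tpre Tne) as [f Hf].
  exists (fun i => fst (f i)), (fun i => snd (f i)). intros n.
  destruct (Hf n) as [X [Y [HQ [HX HY]]]]. rewrite length_map, length_seq, map_map in *.
  exists X, Y. auto.
Qed.

Lemma koenig_cantor (Q : nat -> cantor -> Prop) :
  (forall n n' X, n <= n' -> Q n' X -> Q n X) -> (forall n, exists X, Q n X) ->
  exists X0, forall n, exists X, Q n X /\ restr X n = restr X0 n.
Proof.
  intros Qanti Qne.
  destruct (koenig_cantor_pairs (fun n X (_ : cantor) => Q n X)) as [X0 [Y0 H]].
  - intros n n' X _. apply Qanti.
  - intros n. destruct (Qne n) as [X HX]. exists X, X. exact HX.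
  - exists X0. intros n. destruct (H n) as [X [_ [HQ [HX _]]]]. eauto.
Qed.

Section Functional.
Variable Phi : cantor -> cantor.
Variable h : nat -> nat.

Definition query (sigma : list bool) (m : nat) := h (npair (enc_bits sigma) m).

Hypothesis h_computes_Phi : forall (X : cantor) (m : nat),
  (exists n, query (restr X n) m <> 2) /\
  (forall n, query (restr X n) m <> 2 -> query (restr X n) m = Nat.b2n (Phi X m)).
Hypothesis Phi_inj : injective_cantor Phi.

Lemma query_answer X n m :
  query (restr X n) m <> 2 -> query (restr X n) m = Nat.b2n (Phi X m).
Proof. apply h_computes_Phi. Qed.

Lemma Phi_eq_of_query X Y n m :
  query (restr X n) m <> 2 -> restr Y n = restr X n -> Phi Y m = Phi X m.
Proof.
  intros H E. pose proof (query_answer X n m H) as HX.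
  rewrite <- E in H. pose proof (query_answer Y n m H) as HY. rewrite E in HY.
  destruct (Phi X m), (Phi Y m); simpl in *; congruence.
Qed.

Definition use_bound (N L : nat) :=
  forall X m, m < N -> exists n, n <= L /\ query (restr X n) m <> 2.

Lemma use_bound_mono N L N' L' : use_bound N L -> N' <= N -> L <= L' -> use_bound N' L'.
Proof.
  intros H HN HL X m Hm. destruct (H X m ltac:(lia)) as [n [A B]]. exists n. split; auto. lia.
Qed.

Lemma use_bound_Phi_eq N L X Y m :
  use_bound N L -> m < N -> restr X L = restr Y L -> Phi Y m = Phi X m.
Proof.
  intros H Hm E. destruct (H X m Hm) as [n [A B]]. apply (Phi_eq_of_query X Y n m B).
  symmetry. apply (restr_mono X Y L n); auto.
Qed.

Lemma use_bound_bit m : exists L, forall X, exists n, n <= L /\ query (restr X n) m <> 2.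
Proof.
  apply NNPP. intros Hno.
  destruct (koenig_cantor (fun L X => forall n, n <= L -> query (restr X n) m = 2))
    as [X0 HX0].
  - intros L L' X HL H n Hn. apply H. lia.
  - intros L. apply NNPP. intros HL. apply Hno. exists L. intros X. apply NNPP. intros HX.
    apply HL. exists X. intros n Hn. apply NNPP. intros Hq. apply HX. eauto.
  - destruct (proj1 (h_computes_Phi X0 m)) as [n Hn]. apply Hn.
    destruct (HX0 n) as [X [HX E]]. rewrite <- E. apply HX. lia.
Qed.

Lemma use_bound_exists N : exists L, use_bound N L.
Proof.
  induction N as [|N [L HL]]; [exists 0; intros X m Hm; lia |].
  destruct (use_bound_bit N) as [L' HL']. exists (Nat.max L L').
  intros X m Hm. destruct (Nat.eq_dec m N) as [->|E].
  - destruct (HL' X) as [n [Hn Hq]]. exists n. split; auto. lia.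
  - destruct (HL X m ltac:(lia)) as [n [Hn Hq]]. exists n. split; auto. lia.
Qed.

Definition separates (sigma : list bool) (N : nat) :=
  forall X Y, ext X sigma -> ~ ext Y sigma -> exists m, m < N /\ Phi X m <> Phi Y m.

Lemma separates_mono sigma N N' : separates sigma N -> N <= N' -> separates sigma N'.
Proof.
  intros H HN X Y HX HY. destruct (H X Y HX HY) as [m [A B]]. exists m. split; auto. lia.
Qed.

(* A limit of pairs inside and outside the clopen set [sigma] with ever longer
   common images would have equal images, contradicting injectivity. *)
Lemma separates_exists sigma : exists N, separates sigma N.
Proof.
  apply NNPP. intros Hno.
  destruct (koenig_cantor_pairs (fun n X Y => ext X sigma /\ ~ ext Y sigma /\
                                   forall m, m < n -> Phi X m = Phi Y m)) as [X0 [Y0 H]].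
  - intros n n' X Y Hn [H1 [H2 H3]]. repeat split; auto. intros m Hm. apply H3. lia.
  - intros n. apply NNPP. intros Hn. apply Hno. exists n. intros X Y HX HY. apply NNPP.
    intros Hm. apply Hn. exists X, Y. repeat split; auto.
    intros m Hmn. apply NNPP. intros HPhi. apply Hm. eauto.
  - destruct (H (length sigma)) as [X [Y [[HX [HY _]] [EX EY]]]].
    assert (HX0 : ext X0 sigma) by (apply (ext_of_restr_eq X X0 sigma (length sigma)); auto).
    assert (E0 : restr X0 (length sigma) = restr Y0 (length sigma)).
    { apply restr_eq_iff. intros i _. apply Phi_inj. intros m.
      destruct (proj1 (h_computes_Phi X0 m)) as [n1 Hn1].
      destruct (proj1 (h_computes_Phi Y0 m)) as [n2 Hn2].
      destruct (H (S (m + n1 + n2))) as [X' [Y' [[_ [_ HXY]] [EX' EY']]]].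
      rewrite <- (Phi_eq_of_query X0 X' n1 m Hn1), <- (Phi_eq_of_query Y0 Y' n2 m Hn2).
      - apply HXY. lia.
      - apply (restr_mono _ _ (S (m + n1 + n2))); auto. lia.
      - apply (restr_mono _ _ (S (m + n1 + n2))); auto. lia. }
    apply HY, (ext_of_restr_eq X0 Y sigma (length sigma)); auto. congruence.
Qed.

(** * The limit [b'] *)

Local Open Scope R_scope.

Variable b : list bool -> R.
Hypothesis b_martingale : Phi_martingale Phi b.

Definition approx (n : nat) (sigma : list bool) : R :=
  sumR (all_strings n)
    (fun tau => b tau * (mu (fun X => ext X sigma /\ ext (Phi X) tau)
                         / mu (fun X => ext X sigma))).

Lemma approx_average N L sigma : use_bound N L -> (length sigma <= L)%nat ->
  approx N sigma = (/2)^(L - length sigma) *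
    sumR (all_strings L) (fun rho => indic (ext (pad rho) sigma) * b (restr (Phi (pad rho)) N)).
Proof.
  intros HN HL. unfold approx. rewrite mu_cylinder.
  set (c := (/2)^(L - length sigma)).
  assert (Hc : (/2)^L = c * (/2)^(length sigma)) by (unfold c; rewrite <- pow_add; f_equal; lia).
  assert (Hs : (/2)^(length sigma) <> 0) by (apply pow_nonzero; lra).
  transitivity (sumR (all_strings N) (fun tau => c * sumR (all_strings L)
      (fun rho => indic (ext (pad rho) sigma) * (b tau * indic (ext (Phi (pad rho)) tau))))).
  - apply sumR_ext_in. intros tau Htau. apply in_all_strings_length in Htau.
    rewrite (mu_count L).
    + rewrite Hc.
      transitivity (c * (b tau * sumR (all_strings L)
        (fun rho => indic (ext (pad rho) sigma /\ ext (Phi (pad rho)) tau)))); [field; exact Hs |].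
      f_equal. rewrite <- sumR_scal. apply sumR_ext_in. intros rho _. rewrite indic_and. ring.
    + intros X Y E [HX1 HX2]. split; [apply (ext_of_restr_eq X Y sigma L); auto |].
      intros i Hi. rewrite (use_bound_Phi_eq N L X Y i); auto. lia.
  - rewrite sumR_scal, sumR_swap. f_equal. apply sumR_ext_in. intros rho _.
    rewrite <- (sumR_all_strings_ext N b (Phi (pad rho))), <- sumR_scal.
    apply sumR_ext_in. intros tau _. ring.
Qed.

(* Past the separation index, a cylinder [tau] of outputs is either disjoint
   from [Phi [sigma]] or its preimage lies inside [sigma]. *)
Lemma mu_cylinder_preim N sigma tau : separates sigma N -> (N <= length tau)%nat ->
  mu (fun X => ext X sigma /\ ext (Phi X) tau)
  = indic (exists X, ext X sigma /\ ext (Phi X) (firstn N tau)) * mu (preim Phi tau).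
Proof.
  intros HS HN.
  assert (Hfirstn : forall X, ext X (firstn N tau) <-> forall i, (i < N)%nat -> X i = nth i tau false).
  { intros X. split; intros H i Hi.
    - rewrite H, nth_firstn by (rewrite ?length_firstn; lia).
      destruct (Nat.ltb_spec i N); [reflexivity | lia].
    - rewrite length_firstn in Hi. rewrite nth_firstn.
      destruct (Nat.ltb_spec i N); [apply H | ]; lia. }
  destruct (classic (exists X, ext X sigma /\ ext (Phi X) (firstn N tau))) as [[X0 [H1 H2]]|HG].
  - rewrite indic_true, Rmult_1_l by eauto. apply mu_ext. intros X. unfold preim.
    split; [tauto |]. intros HX. split; auto. apply NNPP. intros HXs.
    destruct (HS X0 X H1 HXs) as [m [Hm Hne]]. apply Hne.
    rewrite (proj1 (Hfirstn _) H2), HX by lia. reflexivity.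
  - rewrite indic_false, Rmult_0_l, <- mu_empty by auto. apply mu_ext. intros X.
    split; [|tauto]. intros [H1 H2]. apply HG. exists X. split; auto.
    apply Hfirstn. intros i Hi. apply H2. lia.
Qed.

Lemma approx_S_stable N M sigma : separates sigma N -> (N <= M)%nat ->
  approx (S M) sigma = approx M sigma.
Proof.
  intros HS HM. unfold approx. rewrite sumR_all_strings_S. apply sumR_ext_in.
  intros tau Htau. apply in_all_strings_length in Htau.
  rewrite !(mu_cylinder_preim N) by (auto; rewrite ?length_app; simpl; lia).
  assert (E : forall c, firstn N (tau ++ [c]) = firstn N tau).
  { intros c. rewrite firstn_app. replace (N - length tau)%nat with 0%nat by lia.
    apply app_nil_r. }
  rewrite !E. set (i := indic _). destruct b_martingale as [_ Hm].
  transitivity (i * (b (tau ++ [false]) * mu (preim Phi (tau ++ [false]))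
                     + b (tau ++ [true]) * mu (preim Phi (tau ++ [true])))
                / mu (fun X => ext X sigma)); [unfold Rdiv; ring |].
  rewrite <- Hm. unfold Rdiv. ring.
Qed.

Lemma approx_stable N M sigma : separates sigma N -> (N <= M)%nat ->
  approx M sigma = approx N sigma.
Proof.
  intros HS. induction 1 as [|M HM IH]; auto. rewrite (approx_S_stable N M); auto.
Qed.

Definition sep_index sigma := epsilon (inhabits 0%nat) (fun N => separates sigma N).

Lemma separates_sep_index sigma : separates sigma (sep_index sigma).
Proof. apply (epsilon_spec (inhabits 0%nat) (fun N => separates sigma N)), separates_exists. Qed.

Definition bprime (sigma : list bool) : R := approx (sep_index sigma) sigma.

Lemma approx_bprime N sigma : separates sigma N -> approx N sigma = bprime sigma.
Proof.
  intros HS. unfold bprime.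
  rewrite <- (approx_stable N (Nat.max N (sep_index sigma))) by (auto; lia).
  apply approx_stable; [apply separates_sep_index | lia].
Qed.

Lemma approx_cv sigma : Un_cv (fun n => approx n sigma) (bprime sigma).
Proof.
  intros eps Heps. exists (sep_index sigma). intros n Hn.
  rewrite approx_bprime by (eapply separates_mono; [apply separates_sep_index | lia]).
  unfold R_dist. rewrite Rminus_diag, Rabs_R0. auto.
Qed.

Lemma bprime_average N L sigma : separates sigma N -> use_bound N L ->
  (length sigma <= L)%nat ->
  bprime sigma = (/2)^(L - length sigma) *
    sumR (all_strings L) (fun rho => indic (ext (pad rho) sigma) * b (restr (Phi (pad rho)) N)).
Proof. intros. rewrite <- (approx_bprime N); auto. apply approx_average; auto. Qed.

Lemma bprime_common_bounds sigmas : exists N L,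
  Forall (fun sigma => separates sigma N /\ (length sigma <= L)%nat) sigmas /\ use_bound N L.
Proof.
  induction sigmas as [|sigma sigmas [N [L [Hall HNL]]]].
  - exists 0%nat, 0%nat. split; [constructor | intros X m Hm; lia].
  - set (N' := Nat.max N (sep_index sigma)).
    destruct (use_bound_exists N') as [L' HL'].
    exists N', (Nat.max (Nat.max L L') (length sigma)). split.
    + constructor.
      * split; [apply (separates_mono _ (sep_index sigma)); [apply separates_sep_index|] |]; lia.
      * eapply Forall_impl; [| exact Hall]. intros s [Hs Hl].
        split; [apply (separates_mono _ N); auto |]; lia.
    + apply (use_bound_mono N' L'); auto; lia.
Qed.

Lemma bprime_nonneg sigma : 0 <= bprime sigma.
Proof.
  destruct (bprime_common_bounds [sigma]) as [N [L [Hall HNL]]].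
  inversion_clear Hall as [|? ? [HS HL] _].
  rewrite (bprime_average N L) by auto.
  apply Rmult_le_pos; [apply pow_le; lra |].
  apply sumR_nonneg. intros rho. apply Rmult_le_pos; [apply indic_nonneg | apply b_martingale].
Qed.

(* Each length-[L] cylinder inside [sigma] lies in exactly one of its two children. *)
Lemma bprime_split sigma : bprime (sigma ++ [false]) + bprime (sigma ++ [true]) = 2 * bprime sigma.
Proof.
  destruct (bprime_common_bounds [sigma; sigma ++ [false]; sigma ++ [true]])
    as [N [L [Hall HNL]]].
  inversion_clear Hall as [|? ? [HS HL] Hall'].
  inversion_clear Hall' as [|? ? [HS0 HL0] Hall''].
  inversion_clear Hall'' as [|? ? [HS1 HL1] _].
  rewrite !(bprime_average N L) by assumption. rewrite !length_app. simpl length.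
  rewrite length_app in HL0. simpl in HL0.
  replace (L - length sigma)%nat with (S (L - (length sigma + 1))) by lia. simpl pow.
  rewrite <- Rmult_plus_distr_l, <- sumR_plus.
  transitivity ((/ 2) ^ (L - (length sigma + 1)) * sumR (all_strings L)
    (fun rho => indic (ext (pad rho) sigma) * b (restr (Phi (pad rho)) N))); [| field].
  f_equal. apply sumR_ext_in. intros rho _.
  rewrite !(indic_iff _ _ (ext_app_iff (pad rho) sigma _)), !indic_and, !indic_bool_eq.
  destruct (pad rho (length sigma)); simpl; ring.
Qed.

Lemma bprime_martingale : martingale bprime.
Proof. split; [apply bprime_nonneg | apply bprime_split]. Qed.

End Functional.

(** * An algorithm for [b'] *)

Section Algorithm.
Variables h g : nat -> nat.
Hypothesis h_computable : computable_fun h.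
Hypothesis g_computable : computable_fun g.

(* Strings of length [L] are handled through their index [r < 2^L] (see
   [bits]); [query_at n r m] is [query h (bits n r) m]. *)
Definition query_at n r m := h (npair (r mod 2 ^ n + 2 ^ n - 1) m).

Definition answer_count L r m := nsum (S L) (fun n => neq_test (query_at n r m) 2).

(* The answer of the shortest answering prefix of length at most [L]; the
   search falls back to [L] when there is none. *)
Definition answer L r m :=
  query_at (minz (fun n => eq_test (query_at n r m) 2 * (L - n))) r m.

Definition unanswered L N :=
  nsum (2 ^ L) (fun r => nsum N (fun m => is_zero (answer_count L r m))).

Definition same_answers L N r r' :=
  is_zero (nsum N (fun m => neq_test (answer L r m) (answer L r' m))).

(* The number of pairs of length-[L] strings, the first extending and the
   second not extending the string of length [s] with index [rs], on which the
   first [N] answers agree. *)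
Definition unseparated s rs L N :=
  nsum (2 ^ L) (fun r => nsum (2 ^ L) (fun r' =>
    eq_test (r mod 2 ^ s) rs * neq_test (r' mod 2 ^ s) rs * same_answers L N r r')).

(* Zero exactly when [N] and [L] are usable bounds for the string [(s, rs)]. *)
Definition bounds_defect s rs N L := (s - L) + unanswered L N + unseparated s rs L N.

Definition good_bounds s rs :=
  minz (fun w => bounds_defect s rs (unpair_fst w) (unpair_snd w)).

Definition output_code L N r := nsum N (fun m => answer L r m * 2 ^ m) + 2 ^ N - 1.

(* [g] at precision [k + 1], split into positive and negative parts and summed
   over the strings of length [L] extending the string [(s, rs)]. *)
Definition sum_pos s rs k L N := nsum (2 ^ L) (fun r =>
  eq_test (r mod 2 ^ s) rs * unpair_fst (g (npair (output_code L N r) (S k)))).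
Definition sum_neg s rs k L N := nsum (2 ^ L) (fun r =>
  eq_test (r mod 2 ^ s) rs * unpair_snd (g (npair (output_code L N r) (S k)))).

(* The average [(sum_pos - sum_neg) / (2^(L-s) 2^(k+1))] rounded to a
   multiple of [2^-k], coded as a difference of two naturals. *)
Definition rounded_average s rs k N L :=
  let M := 2 ^ (L - s) in
  npair ((sum_pos s rs k L N - sum_neg s rs k L N + M) / (2 * M))
        ((sum_neg s rs k L N - sum_pos s rs k L N + M) / (2 * M)).

Definition bprime_code z :=
  let s := enc_length (unpair_fst z) in
  let rs := enc_index (unpair_fst z) in
  let w := good_bounds s rs in
  rounded_average s rs (unpair_snd z) (unpair_fst w) (unpair_snd w).

Lemma computable_query_at : computable_env (fun r => query_at (r 0) (r 1) (r 2)).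
Proof. unfold query_at. computable. Qed.
#[local] Hint Resolve computable_query_at : computable.

Lemma computable_answer : computable_env (fun r => answer (r 0) (r 1) (r 2)).
Proof.
  unfold answer. apply (computable_comp3 query_at); [computable | | computable ..].
  apply (computable_minz (fun n r => eq_test (query_at n (r 1) (r 2)) 2 * (r 0 - n))).
  - computable.
  - intros r. exists (r 0). rewrite Nat.sub_diag. lia.
Qed.
#[local] Hint Resolve computable_answer : computable.

Lemma computable_bounds_defect :
  computable_env (fun r => bounds_defect (r 0) (r 1) (r 2) (r 3)).
Proof.
  unfold bounds_defect, unanswered, unseparated, same_answers, answer_count. computable.
Qed.
#[local] Hint Resolve computable_bounds_defect : computable.

Hypothesis bounds_defect_has_zero : forall s rs, exists w,
  bounds_defect s rs (unpair_fst w) (unpair_snd w) = 0.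

Lemma computable_good_bounds : computable_env (fun r => good_bounds (r 0) (r 1)).
Proof.
  unfold good_bounds.
  apply (computable_minz (fun w r => bounds_defect (r 0) (r 1) (unpair_fst w) (unpair_snd w))).
  - computable.
  - intros r. apply bounds_defect_has_zero.
Qed.
#[local] Hint Resolve computable_good_bounds : computable.

Lemma computable_rounded_average :
  computable_env (fun r => rounded_average (r 0) (r 1) (r 2) (r 3) (r 4)).
Proof. unfold rounded_average, sum_pos, sum_neg, output_code. computable. Qed.
#[local] Hint Resolve computable_rounded_average : computable.

Lemma bprime_code_computable : computable_fun bprime_code.
Proof.
  assert (H : computable_env (fun r => bprime_code (r 0))) by (unfold bprime_code; computable).
  destruct (H 1) as [c Hc]. exists c. intros n. apply (Hc [n]). reflexivity.
Qed.

End Algorithm.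

Local Open Scope R_scope.

Lemma INR_nsum n f : INR (nsum n f) = sumR (seq 0 n) (fun i => INR (f i)).
Proof.
  induction n as [|n IH]; [reflexivity |].
  rewrite seq_S, sumR_app. simpl nsum. rewrite plus_INR, IH. simpl. ring.
Qed.

Lemma round_nat_error d M : (0 < M)%nat ->
  Rabs (INR d / (2 * INR M) - INR ((d + M) / (2 * M))) <= / 2.
Proof.
  intros HM. assert (HM' : 0 < INR M) by (apply lt_0_INR; auto).
  set (q := ((d + M) / (2 * M))%nat). set (rr := ((d + M) mod (2 * M))%nat).
  pose proof (Nat.div_mod (d + M) (2 * M) ltac:(lia)) as D.
  pose proof (Nat.mod_upper_bound (d + M) (2 * M) ltac:(lia)) as U.
  fold q rr in D, U.
  assert (E1 : INR d + INR M = 2 * INR M * INR q + INR rr).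
  { rewrite <- plus_INR, D, plus_INR, !mult_INR. simpl. ring. }
  assert (E2 : INR rr < 2 * INR M) by (apply lt_INR in U; rewrite mult_INR in U; simpl in U; lra).
  pose proof (pos_INR rr).
  replace (INR d / (2 * INR M) - INR q) with ((INR rr - INR M) / (2 * INR M))
    by (field_simplify_eq; lra).
  apply Rabs_le. split.
  - apply (Rmult_le_reg_r (2 * INR M)); [lra |]. field_simplify; lra.
  - apply (Rmult_le_reg_r (2 * INR M)); [lra |]. field_simplify; lra.
Qed.

(* [(x - y) / (2M)] rounded to the nearest integer, written as a difference of
   naturals so that truncated subtraction does no harm. *)
Lemma round_diff_error x y M : (0 < M)%nat ->
  Rabs ((INR x - INR y) / (2 * INR M)
        - (INR ((x - y + M) / (2 * M)) - INR ((y - x + M) / (2 * M)))) <= / 2.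
Proof.
  intros HM.
  assert (Z : (M / (2 * M) = 0)%nat) by (apply Nat.div_small; lia).
  destruct (Nat.le_gt_cases y x).
  - replace (y - x + M)%nat with M by lia. rewrite Z, <- minus_INR by auto. change (INR 0) with 0.
    rewrite Rminus_0_r. apply round_nat_error; auto.
  - replace (x - y + M)%nat with M by lia. rewrite Z.
    replace (INR x - INR y) with (- INR (y - x)) by (rewrite minus_INR by lia; ring).
    rewrite <- Rabs_Ropp. change (INR 0) with 0.
    replace (- (- INR (y - x) / (2 * INR M) - (0 - INR ((y - x + M) / (2 * M)))))
      with (INR (y - x) / (2 * INR M) - INR ((y - x + M) / (2 * M))) by (unfold Rdiv; ring).
    apply round_nat_error; auto.
Qed.

Lemma average_error (l : list nat) (E be : nat -> R) (A C : nat -> nat) (M k : nat) :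
  (forall r, 0 <= E r) ->
  (forall r, Rabs (be r - (INR (A r) - INR (C r)) / 2 ^ S k) <= (/2) ^ S k) ->
  sumR l E = INR M -> (0 < M)%nat ->
  Rabs (sumR l (fun r => E r * be r) / INR M
        - (sumR l (fun r => E r * INR (A r)) - sumR l (fun r => E r * INR (C r)))
          / (2 * INR M) / 2 ^ k) <= (/2) ^ S k.
Proof.
  intros HE Hbe Hcnt HM.
  assert (HM' : 0 < INR M) by (apply lt_0_INR; auto).
  assert (H2k : 0 < 2 ^ k) by (apply pow_lt; lra).
  replace (sumR l (fun r => E r * be r) / INR M
           - (sumR l (fun r => E r * INR (A r)) - sumR l (fun r => E r * INR (C r)))
             / (2 * INR M) / 2 ^ k)
    with (sumR l (fun r => E r * (be r - (INR (A r) - INR (C r)) / 2 ^ S k)) / INR M).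
  2: { rewrite (sumR_ext_in _ _
         (fun r => E r * be r - / 2 ^ S k * (E r * INR (A r) - E r * INR (C r))))
         by (intros; field; apply pow_nonzero; lra).
       rewrite sumR_minus, sumR_scal, sumR_minus. simpl pow. field. lra. }
  unfold Rdiv. rewrite Rabs_mult, (Rabs_right (/ INR M)) by (apply Rle_ge, Rlt_le, Rinv_0_lt_compat; lra).
  apply (Rmult_le_reg_r (INR M)); [lra |]. rewrite Rmult_assoc, Rinv_l, Rmult_1_r by lra.
  eapply Rle_trans; [apply Rabs_sumR |].
  eapply Rle_trans.
  - apply (sumR_le _ _ (fun r => (/2) ^ S k * E r)). intros r _.
    rewrite Rabs_mult, Rabs_right by (apply Rle_ge; auto).
    rewrite Rmult_comm. apply Rmult_le_compat_r; auto.
  - rewrite sumR_scal, Hcnt. lra.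
Qed.

Lemma rounded_average_error (l : list nat) (E be : nat -> R) (A C : nat -> nat) (M k SA SC : nat) :
  (forall r, 0 <= E r) ->
  (forall r, Rabs (be r - (INR (A r) - INR (C r)) / 2 ^ S k) <= (/2) ^ S k) ->
  INR SA = sumR l (fun r => E r * INR (A r)) -> INR SC = sumR l (fun r => E r * INR (C r)) ->
  sumR l E = INR M -> (0 < M)%nat ->
  Rabs (sumR l (fun r => E r * be r) / INR M
        - (INR ((SA - SC + M) / (2 * M)) - INR ((SC - SA + M) / (2 * M))) / 2 ^ k) <= (/2) ^ k.
Proof.
  intros HE Hbe HSA HSC Hcnt HM.
  pose proof (average_error l E be A C M k HE Hbe Hcnt HM) as Havg.
  rewrite <- HSA, <- HSC in Havg.
  assert (Hround : Rabs ((INR SA - INR SC) / (2 * INR M) / 2 ^ k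
     - (INR ((SA - SC + M) / (2 * M)) - INR ((SC - SA + M) / (2 * M))) / 2 ^ k) <= (/2) ^ S k).
  { set (V := (INR SA - INR SC) / (2 * INR M)).
    set (W := INR ((SA - SC + M) / (2 * M)) - INR ((SC - SA + M) / (2 * M))).
    assert (Hk : 0 < / 2 ^ k) by (apply Rinv_0_lt_compat, pow_lt; lra).
    replace (V / 2 ^ k - W / 2 ^ k) with ((V - W) * / 2 ^ k) by (unfold Rdiv; ring).
    rewrite Rabs_mult, (Rabs_right (/ 2 ^ k)) by lra.
    replace ((/ 2) ^ S k) with (/ 2 * / 2 ^ k) by (rewrite pow_inv; simpl; field; apply pow_nonzero; lra).
    apply Rmult_le_compat_r; [lra | apply round_diff_error; auto]. }
  eapply Rle_trans; [| apply Req_le; replace ((/2) ^ k) with ((/2) ^ S k + (/2) ^ S k)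
                        by (simpl; field); reflexivity].
  eapply Rle_trans; [| apply Rplus_le_compat; [exact Havg | exact Hround]].
  eapply Rle_trans; [| apply Rabs_triang]. apply Req_le. f_equal. ring.
Qed.

(** * Correctness of the algorithm *)

Section Correctness.
Local Open Scope nat_scope.
Variable Phi : cantor -> cantor.
Variable h : nat -> nat.
Hypothesis h_computes_Phi : forall (X : cantor) (m : nat),
  (exists n, query h (restr X n) m <> 2) /\
  (forall n, query h (restr X n) m <> 2 -> query h (restr X n) m = Nat.b2n (Phi X m)).
Hypothesis Phi_inj : injective_cantor Phi.

Lemma query_at_restr X L r n m : ext X (bits L r) -> n <= L ->
  query_at h n r m = query h (restr X n) m.
Proof.
  intros HX Hn. unfold query_at, query.
  rewrite (ext_firstn X (bits L r) n HX) by (rewrite bits_length; auto).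
  rewrite firstn_bits, enc_bits_bits by auto. reflexivity.
Qed.

Lemma answer_count_pos L r m :
  answer_count h L r m <> 0 <-> exists n, n <= L /\ query_at h n r m <> 2.
Proof.
  unfold answer_count. rewrite nsum_pos. split.
  - intros [n [Hn Hq]]. exists n. split; [lia |]. rewrite neq_test_spec in Hq.
    destruct (Nat.eqb_spec (query_at h n r m) 2); [lia | auto].
  - intros [n [Hn Hq]]. exists n. split; [lia |]. rewrite neq_test_spec.
    destruct (Nat.eqb_spec (query_at h n r m) 2); [contradiction | lia].
Qed.

Lemma answer_spec L r m X : (exists n, n <= L /\ query_at h n r m <> 2) -> ext X (bits L r) ->
  answer h L r m = Nat.b2n (Phi X m).
Proof.
  intros [n1 [Hn1 Hq1]] HX. unfold answer.
  set (P := fun n => eq_test (query_at h n r m) 2 * (L - n)).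
  destruct (minz_spec P) as [A B]; [exists L; unfold P; rewrite Nat.sub_diag; lia |].
  set (n0 := minz P) in *.
  assert (P1 : P n1 = 0).
  { unfold P. rewrite eq_test_spec. destruct (Nat.eqb_spec (query_at h n1 r m) 2); lia. }
  assert (Hle : n0 <= n1) by (destruct (Nat.le_gt_cases n0 n1); auto; exfalso; eapply B; eauto).
  assert (Hq0 : query_at h n0 r m <> 2).
  { intros E. unfold P in A. rewrite eq_test_spec, E in A. simpl in A.
    assert (n0 = n1) by lia. subst. auto. }
  rewrite (query_at_restr X L) in * by (auto; lia). apply (query_answer Phi h); auto.
Qed.

Lemma answer_spec_use_bound N L r m X : use_bound h N L -> m < N -> ext X (bits L r) ->
  answer h L r m = Nat.b2n (Phi X m).
Proof.
  intros HD Hm HX. apply answer_spec; auto.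
  destruct (HD X m Hm) as [n [Hn1 Hn2]]. exists n. split; auto.
  rewrite (query_at_restr X L); auto.
Qed.

Lemma output_code_restr N L r X : use_bound h N L -> ext X (bits L r) ->
  output_code h L N r = enc_bits (restr (Phi X) N).
Proof.
  intros HD HX. unfold output_code. rewrite enc_bits_restr. do 2 f_equal.
  apply nsum_ext_lt. intros m Hm. f_equal. apply (answer_spec_use_bound N); auto.
Qed.

Lemma unanswered_zero_iff N L : unanswered h L N = 0 <-> use_bound h N L.
Proof.
  unfold unanswered. rewrite nsum_zero. split.
  - intros H X m Hm. destruct (restr_index_spec X L) as [R1 R2].
    pose proof (proj1 (nsum_zero _ _) (H _ R1) m Hm) as E. cbv beta in E.
    rewrite is_zero_spec in E.
    assert (Hc : answer_count h L (restr_index X L) m <> 0)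
      by (destruct (Nat.eqb_spec (answer_count h L (restr_index X L) m) 0); congruence).
    destruct (proj1 (answer_count_pos _ _ _) Hc) as [n [Hn1 Hn2]].
    exists n. split; auto. rewrite <- (query_at_restr X L (restr_index X L)); auto.
  - intros HD r Hr. apply nsum_zero. intros m Hm. rewrite is_zero_spec.
    destruct (Nat.eqb_spec (answer_count h L r m) 0) as [E|E]; [| reflexivity].
    exfalso. apply (proj2 (answer_count_pos L r m)); auto.
    destruct (HD (pad (bits L r)) m Hm) as [n [Hn1 Hn2]]. exists n. split; auto.
    rewrite (query_at_restr (pad (bits L r)) L); auto. apply ext_pad.
Qed.

Lemma same_answers_zero_iff N L r r' X Y : use_bound h N L ->
  ext X (bits L r) -> ext Y (bits L r') ->
  same_answers h L N r r' = 0 <-> exists m, m < N /\ Phi X m <> Phi Y m.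
Proof.
  intros HD HX HY. unfold same_answers. rewrite is_zero_spec.
  destruct (Nat.eqb_spec (nsum N (fun m => neq_test (answer h L r m) (answer h L r' m))) 0)
    as [E|E]; [rewrite nsum_zero in E | rewrite nsum_pos in E]; split; intros H;
    try discriminate; try reflexivity.
  - exfalso. destruct H as [m [Hm HXY]]. specialize (E m Hm). cbv beta in E. rewrite neq_test_spec in E.
    rewrite (answer_spec_use_bound N L r m X), (answer_spec_use_bound N L r' m Y) in E by auto.
    destruct (Phi X m), (Phi Y m); simpl in E; congruence.
  - destruct E as [m [Hm E]]. exists m. split; auto. rewrite neq_test_spec in E.
    rewrite (answer_spec_use_bound N L r m X), (answer_spec_use_bound N L r' m Y) in E by auto.
    intros HXY. rewrite HXY, Nat.eqb_refl in E. auto.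
Qed.

Lemma unseparated_zero_iff sigma N L : use_bound h N L -> length sigma <= L ->
  unseparated h (length sigma) (enc_bits sigma + 1 - 2 ^ length sigma) L N = 0
  <-> separates Phi sigma N.
Proof.
  intros HD HL. set (rs := enc_bits sigma + 1 - 2 ^ length sigma).
  unfold unseparated. rewrite nsum_zero. split.
  - intros H X Y HX HY.
    destruct (restr_index_spec X L) as [RX HXr], (restr_index_spec Y L) as [RY HYr].
    pose proof (proj1 (nsum_zero _ _) (H _ RX) _ RY) as E. cbv beta in E.
    rewrite (proj1 (ext_bits_iff X L _ sigma HL HXr) HX), eq_test_spec, Nat.eqb_refl,
      neq_test_spec in E.
    destruct (Nat.eqb_spec (restr_index Y L mod 2 ^ length sigma) rs) as [E'|_].
    + exfalso. apply HY, (ext_bits_iff Y L _ sigma HL HYr), E'.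
    + apply (same_answers_zero_iff N L (restr_index X L) (restr_index Y L) X Y); auto. lia.
  - intros HS r Hr. apply nsum_zero. intros r' Hr'.
    rewrite eq_test_spec, neq_test_spec.
    destruct (Nat.eqb_spec (r mod 2 ^ length sigma) rs) as [E1|E1]; [| lia].
    destruct (Nat.eqb_spec (r' mod 2 ^ length sigma) rs) as [E2|E2]; [lia |].
    rewrite (proj2 (same_answers_zero_iff N L r r' (pad (bits L r)) (pad (bits L r')) HD
                     (ext_pad _) (ext_pad _))); [lia |].
    apply HS.
    + apply (ext_bits_iff _ L r sigma HL (ext_pad _)), E1.
    + intros HY. apply E2, (ext_bits_iff _ L r' sigma HL (ext_pad _)), HY.
Qed.

Lemma bounds_defect_zero_iff sigma N L :
  bounds_defect h (length sigma) (enc_bits sigma + 1 - 2 ^ length sigma) N L = 0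
  <-> length sigma <= L /\ use_bound h N L /\ separates Phi sigma N.
Proof.
  unfold bounds_defect. split.
  - intros H. assert (HL : length sigma <= L) by lia.
    assert (HD : use_bound h N L) by (apply (proj1 (unanswered_zero_iff N L)); lia).
    split; [| split]; auto. apply (proj1 (unseparated_zero_iff sigma N L HD HL)). lia.
  - intros [HL [HD HS]].
    rewrite (proj2 (unanswered_zero_iff N L) HD), (proj2 (unseparated_zero_iff sigma N L HD HL) HS).
    lia.
Qed.

(* Indices [rs >= 2^s] code no string; any [N, L] with [s <= L] then work. *)
Lemma good_bounds_exist s rs : exists w,
  bounds_defect h s rs (unpair_fst w) (unpair_snd w) = 0.
Proof.
  destruct (Nat.lt_ge_cases rs (2 ^ s)) as [Hrs|Hrs].
  - set (sigma := bits s rs).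
    assert (Hs : length sigma = s) by apply bits_length.
    assert (Hrs' : enc_bits sigma + 1 - 2 ^ length sigma = rs).
    { rewrite Hs. unfold sigma. rewrite enc_bits_bits, Nat.mod_small by auto.
      pose proof (pow2_pos s). lia. }
    destruct (separates_exists Phi h h_computes_Phi Phi_inj sigma) as [N HN].
    destruct (use_bound_exists Phi h h_computes_Phi N) as [L HL].
    exists (npair N (Nat.max L s)). rewrite unpair_fst_npair, unpair_snd_npair, <- Hs, <- Hrs'.
    apply bounds_defect_zero_iff. repeat split; auto; [lia |].
    apply (use_bound_mono h N L); auto; lia.
  - exists (npair 0 s). rewrite unpair_fst_npair, unpair_snd_npair.
    unfold bounds_defect, unanswered, unseparated. rewrite Nat.sub_diag.
    rewrite (proj2 (nsum_zero _ _)); [| intros r _; reflexivity].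
    rewrite (proj2 (nsum_zero _ _)); [reflexivity |].
    intros r _. apply nsum_zero. intros r' _. rewrite eq_test_spec.
    pose proof (Nat.mod_upper_bound r (2 ^ s) ltac:(pose proof (pow2_pos s); lia)).
    destruct (Nat.eqb_spec (r mod 2 ^ s) rs); lia.
Qed.

Local Open Scope R_scope.

Variables (b : list bool -> R) (g : nat -> nat).
Hypothesis b_martingale : Phi_martingale Phi b.
Hypothesis g_approximates_b : forall (tau : list bool) (k : nat),
  exists a c : nat, g (npair (enc_bits tau) k) = npair a c /\
                    Rabs (b tau - (INR a - INR c) / 2 ^ k) <= (/ 2) ^ k.

Lemma indic_ext_bits L r sigma : (length sigma <= L)%nat ->
  indic (ext (pad (bits L r)) sigma)
  = INR (eq_test (r mod 2 ^ length sigma) (enc_bits sigma + 1 - 2 ^ length sigma)).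
Proof.
  intros HL. rewrite eq_test_spec.
  destruct (Nat.eqb_spec (r mod 2 ^ length sigma) (enc_bits sigma + 1 - 2 ^ length sigma)) as [E|E].
  - apply indic_true, (ext_bits_iff _ L r sigma HL (ext_pad _)), E.
  - apply indic_false. intros HX. apply E, (ext_bits_iff _ L r sigma HL (ext_pad _)), HX.
Qed.

Lemma bprime_code_spec sigma k : exists a c,
  bprime_code h g (npair (enc_bits sigma) k) = npair a c /\
  Rabs (bprime Phi b sigma - (INR a - INR c) / 2 ^ k) <= (/ 2) ^ k.
Proof.
  unfold bprime_code, enc_index.
  rewrite unpair_fst_npair, unpair_snd_npair, enc_length_enc_bits.
  set (s := length sigma). set (rs := (enc_bits sigma + 1 - 2 ^ s)%nat).
  set (w := good_bounds h s rs).
  assert (HV : bounds_defect h s rs (unpair_fst w) (unpair_snd w) = 0%nat)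
    by exact (proj1 (minz_spec _ (good_bounds_exist s rs))).
  set (N := unpair_fst w) in *. set (L := unpair_snd w) in *.
  destruct (proj1 (bounds_defect_zero_iff sigma N L) HV) as [HL [HD HS]].
  unfold rounded_average. eexists; eexists; split; [reflexivity |].
  rewrite (bprime_average Phi h h_computes_Phi Phi_inj b b_martingale N L sigma) by auto.
  rewrite all_strings_bits, sumR_map.
  rewrite (sumR_ext_in _ _ (fun r => INR (eq_test (r mod 2 ^ s) rs) * b (restr (Phi (pad (bits L r))) N)))
    by (intros; rewrite indic_ext_bits; auto).
  fold s. replace ((/ 2) ^ (L - s)) with (/ INR (2 ^ (L - s)))
    by (rewrite pow_INR, pow_inv; reflexivity).
  rewrite Rmult_comm. apply (rounded_average_error _ _ _
    (fun r => unpair_fst (g (npair (output_code h L N r) (S k))))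
    (fun r => unpair_snd (g (npair (output_code h L N r) (S k))))).
  - intros; apply pos_INR.
  - intros r. rewrite (output_code_restr N L r (pad (bits L r)) HD (ext_pad _)).
    destruct (g_approximates_b (restr (Phi (pad (bits L r))) N) (S k)) as [a [c [E B]]].
    rewrite E, unpair_fst_npair, unpair_snd_npair. exact B.
  - unfold sum_pos. rewrite INR_nsum. apply sumR_ext_in. intros; apply mult_INR.
  - unfold sum_neg. rewrite INR_nsum. apply sumR_ext_in. intros; apply mult_INR.
  - rewrite pow_INR. replace (INR 2) with 2 by (simpl; ring).
    transitivity (sumR (all_strings L) (fun rho => indic (ext (pad rho) sigma)));
      [| apply count_ext; auto].
    rewrite all_strings_bits, sumR_map.
    apply sumR_ext_in. intros; rewrite indic_ext_bits; auto.
  - apply pow2_pos.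
Qed.

End Correctness.

Theorem lemmaL3 (Phi : cantor -> cantor) (b : list bool -> R)
  (HPhi : computable_functional Phi) (Hinj : injective_cantor Phi)
  (Hb : Phi_martingale Phi b) (Hbc : computable_real_fun b) :
  exists b' : list bool -> R,
    (forall sigma : list bool,
        Un_cv (fun n : nat =>
                 sumR (all_strings n)
                   (fun tau => b tau *
                      (mu (fun X => ext X sigma /\ ext (Phi X) tau)
                       / mu (fun X => ext X sigma))))
              (b' sigma)) /\
    martingale b' /\ computable_real_fun b'.
Proof.
  destruct HPhi as [h [h_computable Hh]]. destruct Hbc as [g [g_computable Hg]].
  exists (bprime Phi b). split; [| split].
  - exact (approx_cv Phi h Hh Hinj b Hb).
  - exact (bprime_martingale Phi h Hh Hinj b Hb).
  - exists (bprime_code h g). split.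
    + apply bprime_code_computable; auto. apply (good_bounds_exist Phi h Hh Hinj).
    + exact (bprime_code_spec Phi h Hh Hinj b g Hb Hg).
Qed.
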